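(* Assume the following setting. $S$ is a finite semigroup with anti-involution $*$, $R$ a commutative ring with $1$, $\alpha$ a twisting from $S$ into $R$ with $\alpha(x,y)=\alpha(y^*,x^* )$; for each $\mathcal D$-class $D$ there is an idempotent $1_D\in D$ with $1_D^*=1_D$; $L_D$ is the $\mathcal L$-class of $1_D$, $L_D^*=\{x^*\mid x\in L_D\}$, $G_D=L_D\cap L_D^*$; for each $D$ there is $\beta_D:L_D\times L_D^*\to G(R)$ with $\beta_D(x,y)\beta_D(xy,z)=\beta_D(x,yz)\beta_D(y,z)$, $\alpha(x,y)\beta_D(xy,z)=\alpha(x,yz)\beta_D(y,z)$ and $\beta_D(x,y)=\beta_D(y^*,x^* )$ whenever all occurring values of $\beta_D$ have arguments in $L_D\times L_D^*$; and $R^{\beta_D}[G_D]$ is cellular with cell datum $(\Lambda_D,M_D,C,* )$. Let $R^\alpha[S]$ have the cell datum $(\Lambda,M,C,* )$ where $\Lambda=\{(D,\lambda)\}$ with $(D_1,\lambda_1)\le(D_2,\lambda_2)$ iff $D_1<_{\mathcal D}D_2$ or ($D_1=D_2$, $\lambda_1\le\lambda_2$), $M(D,\lambda)=\mathcal L_D\times M_D(\lambda)$ ($\mathcal L_D$ the set of $\mathcal L$-classes in $D$), $u_L\in L$ with $u_L\,\mathcal R\,1_D$ chosen for each $L\in\mathcal L_D$, and $C^{(D,\lambda)}_{(L,s)(K,t)}=\sum_{g\in G_D}c^\lambda_{st}(g)\beta_D(u_L^*,g)\beta_D(u_L^*g,u_K)(u_L^*gu_K)$ where $C^\lambda_{st}=\sum_g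 c^\lambda_{st}(g)g$. Define the twisted sandwich matrix $P_D^\alpha\in\mathrm{Mat}_{\mathcal L_D}(R^{\beta_D}[G_D])$ by $(P_D^\alpha)_{LK}=0$ if $u_Lu_K^*<_{\mathcal D}D$ and $(P_D^\alpha)_{LK}=\alpha(u_L,u_K^* )\,u_Lu_K^*$ if $u_Lu_K^*\in G_D$ (one of these always holds). Then for all $(D,\lambda)\in\Lambda$ and $(L,s),(K,t)\in M(D,\lambda)$, \[\phi^{(D,\lambda)}\big(C_{(L,s)},C_{(K,t)}\big)=\phi^\lambda_{(P_D^\alpha)_{LK}}(C_s,C_t),\] where the left side is the form for the cellular algebra $R^\alpha[S]$ and the right side is the form for the cellular algebra $R^{\beta_D}[G_D]$.
   Context: Green's relations ($S^1$ = $S$ with identity adjoined): $x\le_{\mathcal R}y$ iff $x\in yS^1$, $x\le_{\mathcal L}y$ iff $x\in S^1y$, $x\le_{\mathcal J}y$ iff $x\in S^1yS^1$; $\mathcal R,\mathcal L,\mathcal J$ associated equivalences; $\mathcal H=\mathcal R\cap\mathcal L$; $\mathcal D$ generated by $\mathcal R\cup\mathcal L$; for finite $S$, $\mathcal D=\mathcal J$ and $<_{\mathcal D}$ is the strict order on $\mathcal D$-classes induced by $\le_{\mathcal J}$ ($x<_{\mathcal D}D$ means the class of $x$ is strictly below $D$). Anti-involution of $S$: $(x^* )^*=x$, $(xy)^*=y^*x^*$; it and $*|_{G_D}$ extend linearly to anti-involutions of the algebras. A twisting satisfies $\alpha(x,y)\alpha(xy,z)=\alpha(x,yz)\alpha(y,z)$;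 $R^\alpha[S]$ has basis $S$ and product $x\cdot y=\alpha(x,y)(xy)$; $R^{\beta_D}[G_D]$ likewise with $\beta_D$. Cellular algebra $A$ with cell datum $(\Lambda,M,C,* )$: $\Lambda$ a finite poset, $\{C^\lambda_{st}: s,t\in M(\lambda)\}$ an $R$-basis, $(C^\lambda_{st})^*=C^\lambda_{ts}$, and for $a\in A$ there are $r_a(s',s)\in R$ with $aC^\lambda_{st}\in\sum_{s'}r_a(s',s)C^\lambda_{s't}+A(<\lambda)$ for all $t$, where $A(<\lambda)=\mathrm{span}\{C^\mu_{uv}:\mu<\lambda\}$. Cell module $W(\lambda)$: free $R$-module on $\{C_s: s\in M(\lambda)\}$. For $a\in A$, the bilinear form $\phi^\lambda_a$ on $W(\lambda)$ is defined on basis elements by: $\phi^\lambda_a(C_s,C_t)$ is the unique element of $R$ with $C^\lambda_{s's}\,a\,C^\lambda_{tt'}\in\phi^\lambda_a(C_s,C_t)C^\lambda_{s't'}+A(<\lambda)$ for all $s',t'\in M(\lambda)$; and $\phi^\lambda=\phi^\lambda_1$ (here $\phi^\lambda(C_s,C_t)$ is likewise the unique scalar with $C^\lambda_{s's}C^\lambda_{tt'}\in\phi^\lambda(C_s,C_t)C^\lambda_{s't'}+A(<\lambda)$). *)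

From mathcomp Require Import all_boot all_algebra.
From Stdlib Require Import ClassicalEpsilon.
Set Implicit Arguments. Unset Strict Implicit. Unset Printing Implicit Defensive.
Import GRing.Theory.
Local Open Scope ring_scope.

(* Free R-modules R^(I) on a finite set I, represented as {ffun I -> R}.    *)
Definition fsc (R : pzRingType) (I : finType) (c : R) (f : {ffun I -> R})
  : {ffun I -> R} := [ffun i => c * f i].

Definition delta (R : pzRingType) (I : finType) (x : I) : {ffun I -> R} :=
  [ffun i => (i == x)%:R].

Definition strict (T : eqType) (le : rel T) : rel T := fun x y => le x y && (x != y).

Definition lower_span (R : pzRingType) (I : finType) (Lam : finType) (lt : rel Lam)
  (M : Lam -> finType) (C : forall l, M l -> M l -> {ffun I -> R})
  (l : Lam) (v : {ffun I -> R}) : Prop :=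
  exists c : forall m, M m -> M m -> R,
    v = \sum_(m | lt m l) \sum_(s : M m) \sum_(t : M m) fsc (c m s t) (C m s t).

Definition is_cellular (R : comPzRingType) (I : finType)
  (mul : {ffun I -> R} -> {ffun I -> R} -> {ffun I -> R})
  (star : {ffun I -> R} -> {ffun I -> R})
  (Lam : finType) (le : rel Lam) (M : Lam -> finType)
  (C : forall l, M l -> M l -> {ffun I -> R}) : Prop :=
  [/\
      [/\ reflexive le, antisymmetric le & transitive le],
      (* the C^l_{st} form an R-basis *)
      bijective (fun c : {ffun {l : Lam & (M l * M l)%type} -> R} =>
                   \sum_i fsc (c i) (C (tag i) (tagged i).1 (tagged i).2)),
      [/\ involutive star,
          (forall a b, star (mul a b) = mul (star b) (star a)) &
          (forall (c : R) a b, star (fsc c a + b) = fsc c (star a) + star b)],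
      (forall l s t, star (C l s t) = C l t s) &
      (forall a l (s : M l), exists r : M l -> R, forall t : M l,
         lower_span (strict le) C l
           (mul a (C l s t) - \sum_(s' : M l) fsc (r s') (C l s' t)))].

Definition is_phi (R : pzRingType) (I : finType)
  (mul : {ffun I -> R} -> {ffun I -> R} -> {ffun I -> R})
  (Lam : finType) (lt : rel Lam) (M : Lam -> finType)
  (C : forall l, M l -> M l -> {ffun I -> R}) (l : Lam) (s t : M l) (r : R) : Prop :=
  forall s' t' : M l,
    lower_span lt C l (mul (C l s' s) (C l t t') - fsc r (C l s' t')).

Definition phi (R : pzRingType) (I : finType)
  (mul : {ffun I -> R} -> {ffun I -> R} -> {ffun I -> R})
  (Lam : finType) (lt : rel Lam) (M : Lam -> finType)
  (C : forall l, M l -> M l -> {ffun I -> R}) (l : Lam) (s t : M l) : R :=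
  epsilon (inhabits 0) (is_phi mul lt C s t).

Definition is_phi_a (R : pzRingType) (I : finType)
  (mul : {ffun I -> R} -> {ffun I -> R} -> {ffun I -> R})
  (Lam : finType) (lt : rel Lam) (M : Lam -> finType)
  (C : forall l, M l -> M l -> {ffun I -> R}) (a : {ffun I -> R})
  (l : Lam) (s t : M l) (r : R) : Prop :=
  forall s' t' : M l,
    lower_span lt C l (mul (mul (C l s' s) a) (C l t t') - fsc r (C l s' t')).

Definition phi_a (R : pzRingType) (I : finType)
  (mul : {ffun I -> R} -> {ffun I -> R} -> {ffun I -> R})
  (Lam : finType) (lt : rel Lam) (M : Lam -> finType)
  (C : forall l, M l -> M l -> {ffun I -> R}) (a : {ffun I -> R})
  (l : Lam) (s t : M l) : R :=
  epsilon (inhabits 0) (is_phi_a mul lt C a s t).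

(* Green's relations on a finite semigroup (S, mul); S^1 is modelled by     *)
(* option S (None = adjoined identity).                                     *)
Definition lmul1 (S : Type) (mul : S -> S -> S) (a : option S) (x : S) : S :=
  if a is Some a then mul a x else x.
Definition rmul1 (S : Type) (mul : S -> S -> S) (x : S) (b : option S) : S :=
  if b is Some b then mul x b else x.

Definition Rle (S : finType) (mul : S -> S -> S) (x y : S) : bool :=
  [exists b : option S, x == rmul1 mul y b].
Definition Lle (S : finType) (mul : S -> S -> S) (x y : S) : bool :=
  [exists a : option S, x == lmul1 mul a y].
Definition Jle (S : finType) (mul : S -> S -> S) (x y : S) : bool :=
  [exists a : option S, exists b : option S, x == rmul1 mul (lmul1 mul a y) b].

Definition Rrel (S : finType) (mul : S -> S -> S) (x y : S) : bool :=
  Rle mul x y && Rle mul y x.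
Definition Lrel (S : finType) (mul : S -> S -> S) (x y : S) : bool :=
  Lle mul x y && Lle mul y x.
(* for finite S, D = J *)
Definition Jrel (S : finType) (mul : S -> S -> S) (x y : S) : bool :=
  Jle mul x y && Jle mul y x.

Definition is_Dclass (S : finType) (mul : S -> S -> S) (D : {set S}) : bool :=
  [exists x, D == [set y | Jrel mul x y]].
Definition is_Lclass (S : finType) (mul : S -> S -> S) (L : {set S}) : bool :=
  [exists x, L == [set y | Lrel mul x y]].

Definition Dcl (S : finType) (mul : S -> S -> S) : finType :=
  {D : {set S} | is_Dclass mul D}.

Definition Lcl (S : finType) (mul : S -> S -> S) (D : Dcl mul) : finType :=
  {L : {set S} | is_Lclass mul L && (L \subset val D)}.

Definition Dlt (S : finType) (mul : S -> S -> S) (D1 D2 : {set S}) : bool :=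
  [exists x in D1, exists y in D2, Jle mul x y && ~~ Jle mul y x].
Definition LD (S : finType) (mul : S -> S -> S) (one : Dcl mul -> S) (D : Dcl mul)
  : {set S} := [set y | Lrel mul y (one D)].
Definition LDs (S : finType) (mul : S -> S -> S) (star : S -> S) (one : Dcl mul -> S)
  (D : Dcl mul) : {set S} := [set star y | y in LD one D].
Definition GD (S : finType) (mul : S -> S -> S) (star : S -> S) (one : Dcl mul -> S)
  (D : Dcl mul) : {set S} := LD one D :&: LDs star one D.

Definition Gt (S : finType) (mul : S -> S -> S) (star : S -> S) (one : Dcl mul -> S)
  (D : Dcl mul) : finType := {x : S | x \in GD star one D}.

Definition tmul (R : pzRingType) (S : finType) (mul : S -> S -> S) (alpha : S -> S -> R)
  (f g : {ffun S -> R}) : {ffun S -> R} :=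
  [ffun z => \sum_(x : S) \sum_(y : S | mul x y == z) alpha x y * f x * g y].

Definition tstar (R : pzRingType) (S : finType) (star : S -> S) (f : {ffun S -> R})
  : {ffun S -> R} := [ffun x => f (star x)].

Definition gmul (R : pzRingType) (S : finType) (mul : S -> S -> S) (star : S -> S)
  (one : Dcl mul -> S) (D : Dcl mul) (beta : S -> S -> R)
  (f g : {ffun Gt star one D -> R}) : {ffun Gt star one D -> R} :=
  [ffun z => \sum_(x : Gt star one D) \sum_(y : Gt star one D | mul (val x) (val y) == val z)
              beta (val x) (val y) * f x * g y].

(* g |-> g^* on G_D (G_D is *-closed under the standing hypotheses) *)
Definition gstar (R : pzRingType) (S : finType) (mul : S -> S -> S) (star : S -> S)
  (one : Dcl mul -> S) (D : Dcl mul) (f : {ffun Gt star one D -> R})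
  : {ffun Gt star one D -> R} :=
  [ffun g => f (insubd g (star (val g)))].

Definition bigC (R : pzRingType) (S : finType) (mul : S -> S -> S) (star : S -> S)
  (one : Dcl mul -> S) (beta : Dcl mul -> S -> S -> R) (u : {set S} -> S)
  (Lam : Dcl mul -> finType) (M : forall D, Lam D -> finType)
  (C : forall D (l : Lam D), M D l -> M D l -> {ffun Gt star one D -> R})
  (D : Dcl mul) (l : Lam D) (L : Lcl D) (s : M D l) (K : Lcl D) (t : M D l)
  : {ffun S -> R} :=
  let uL := u (val L) in let uK := u (val K) in
  \sum_(g : Gt star one D)
     fsc (C D l s t g * beta D (star uL) (val g) * beta D (mul (star uL) (val g)) uK)
         (delta R (mul (mul (star uL) (val g)) uK)).

Definition BLam (S : finType) (mul : S -> S -> S) (Lam : Dcl mul -> finType) : finType :=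
  {D : Dcl mul & Lam D}.

Definition Ble (S : finType) (mul : S -> S -> S) (Lam : Dcl mul -> finType)
  (le : forall D, rel (Lam D)) : rel (BLam Lam) :=
  fun p q => Dlt mul (val (tag p)) (val (tag q))
             || ((tag p == tag q) && le (tag q) (tagged_as q p) (tagged q)).

Definition BM (S : finType) (mul : S -> S -> S) (Lam : Dcl mul -> finType)
  (M : forall D, Lam D -> finType) (p : BLam Lam) : finType :=
  (Lcl (tag p) * M (tag p) (tagged p))%type.

Definition BC (R : pzRingType) (S : finType) (mul : S -> S -> S) (star : S -> S)
  (one : Dcl mul -> S) (beta : Dcl mul -> S -> S -> R) (u : {set S} -> S)
  (Lam : Dcl mul -> finType) (M : forall D, Lam D -> finType)
  (C : forall D (l : Lam D), M D l -> M D l -> {ffun Gt star one D -> R})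
  (p : BLam Lam) (x y : BM M p) : {ffun S -> R} :=
  @bigC R S mul star one beta u Lam M C (tag p) (tagged p) x.1 x.2 y.1 y.2.

(* the twisted sandwich matrix entry (P_D^alpha)_{LK} in R^{beta_D}[G_D]:
   alpha(u_L, u_K^* ) u_L u_K^* if u_L u_K^* \in G_D, and 0 otherwise
   (i.e. when u_L u_K^* <_D D) *)
Definition sandwich (R : pzRingType) (S : finType) (mul : S -> S -> S) (star : S -> S)
  (one : Dcl mul -> S) (alpha : S -> S -> R) (u : {set S} -> S)
  (D : Dcl mul) (L K : Lcl D) : {ffun Gt star one D -> R} :=
  let uL := u (val L) in let uK := u (val K) in
  [ffun g => if val g == mul uL (star uK) then alpha uL (star uK) else 0].

From mathcomp Require Import all_boot all_algebra zify ring.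
From Stdlib Require Import ClassicalEpsilon FunctionalExtensionality PropExtensionality.
Set Implicit Arguments. Unset Strict Implicit. Unset Printing Implicit Defensive.

(* Fix a D-class D with idempotent 1_D.  For L-classes L, K of D, [emb L K] sends g in
   G_D to beta_D(u_L^*, g) beta_D(u_L^* g, u_K) u_L^* g u_K, and carries C^l_{st} to
   C^{(D,l)}_{(L,s)(K,t)}.  Every element of D is u_L^* g u_K for unique L, g, K, and the
   beta_D are units, so [emb L K] identifies the lower span at l in R^{beta_D}[G_D] with
   the (L, K)-part of the lower span at (D, l) in R^alpha[S].  If u_L u_K^* lies in G_D,
   the twisting identities give emb_{L'L}(f) emb_{KK'}(f') = emb_{L'K'}(f P_{LK} f');
   otherwise, by stability of the finite semigroup S, every u_{L'}^* g u_L u_K^* h u_{K'}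
   lies in a D-class below D, so the product vanishes modulo the lower span, as does
   P_{LK} = 0.  Hence both bilinear forms are defined by the same congruence. *)


Section FinitePowers.
Variables (S : finType) (mul : S -> S -> S).
Hypothesis mulA : forall x y z, mul x (mul y z) = mul (mul x y) z.

(* [spow z n] is z^(n+1): there is no unit to start from. *)
Definition spow z n := iter n (fun y => mul y z) z.

Lemma spowS z n : spow z n.+1 = mul (spow z n) z.
Proof. by []. Qed.

Lemma spowD z m n : mul (spow z m) (spow z n) = spow z (m + n).+1.
Proof.
elim: n => [|n IH]; first by rewrite addn0.
by rewrite spowS mulA IH addnS.
Qed.

Lemma spow_comm z n : mul z (spow z n) = mul (spow z n) z.
Proof. by rewrite -[z in mul z _]/(spow z 0) spowD -spowS. Qed.

Lemma exists_idempotent_spow z : exists n, mul (spow z n) (spow z n) = spow z n.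
Proof.
pose f (i : 'I_#|S|.+1) := spow z i.
have /injectivePn[i [j ne_ij eq_ij]] : ~~ injectiveb f.
  by apply/injectiveP => /leq_card; rewrite card_ord ltnn.
wlog lt_ij : i j ne_ij eq_ij / i < j.
  move=> wlog; case: (ltngtP i j) => [|lt_ji|/val_inj eq]; first exact: wlog.
  - by apply: (wlog j i); rewrite // eq_sym.
  - by rewrite eq eqxx in ne_ij.
set d := j - i.
have shift r : spow z (r + i) = spow z (r + j).
  by rewrite /spow !iterD -/(spow z i) -/(spow z j); congr iter.
have periodic t k : i <= k -> spow z k = spow z (k + t * d).
  elim: t k => [|t IH] k le_ik; first by rewrite mul0n addn0.
  rewrite IH //; have -> : k + t.+1 * d = (k - i + t * d) + j by rewrite /d; lia.
  by rewrite -shift; congr spow; rewrite /d; lia.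
exists (i.+1 * d).-1.
rewrite spowD (periodic i.+1 ((i.+1 * d).-1)); last by rewrite /d; nia.
by congr spow; rewrite /d; nia.
Qed.

Lemma sandwich_spow a x b n :
  x = mul (mul a x) b -> x = mul (mul (spow a n) x) (spow b n).
Proof.
move=> h; elim: n => [//|n IH].
by rewrite {1}IH {1}h !spowS -[mul (spow b n) b]spow_comm !mulA.
Qed.

(* Stability of finite semigroups: an idempotent power of [b] fixes [x] on the right. *)
Lemma sandwich_fixR a x b :
  x = mul (mul a x) b -> x = mul x b \/ exists c, x = mul x (mul b c).
Proof.
move=> h; have [n idem] := exists_idempotent_spow b.
have E := sandwich_spow n h.
have {E} fix_x : x = mul x (spow b n) by rewrite {2}E -mulA idem -E.
case: n idem fix_x => [|n] _ fix_x; first by left.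
by right; exists (spow b n); rewrite spow_comm -spowS.
Qed.

Lemma sandwich_fixL a x b :
  x = mul (mul a x) b -> x = mul a x \/ exists c, x = mul (mul c a) x.
Proof.
move=> h; have [n idem] := exists_idempotent_spow a.
have E := sandwich_spow n h.
have {E} fix_x : x = mul (spow a n) x by rewrite {2}E !mulA idem -E.
case: n idem fix_x => [|n] _ fix_x; first by left.
by right; exists (spow a n).
Qed.

End FinitePowers.

Import GRing.Theory.
Local Open Scope ring_scope.

Section FreeModule.
Variables (R : pzRingType) (I : finType).

Lemma fscE c (f : {ffun I -> R}) i : fsc c f i = c * f i.
Proof. by rewrite ffunE. Qed.

Lemma fscN1 (f : {ffun I -> R}) : fsc (-1) f = - f.
Proof. by apply/ffunP => i; rewrite fscE !ffunE mulN1r. Qed.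

Lemma deltaE (x i : I) : delta R x i = (i == x)%:R.
Proof. by rewrite ffunE. Qed.

Lemma sum_fsc_deltaE (J : finType) (a : J -> R) (x : J -> I) i :
  (\sum_j fsc (a j) (delta R (x j))) i = \sum_j a j * (i == x j)%:R.
Proof. by rewrite sum_ffunE; apply: eq_bigr => j _; rewrite fscE deltaE. Qed.

End FreeModule.

Section LowerSpan.
Local Unset Implicit Arguments.
Variables (R : comPzRingType) (I Lam : finType) (lt : rel Lam) (M : Lam -> finType).
Variables (C : forall m, M m -> M m -> {ffun I -> R}) (l : Lam).
Local Set Implicit Arguments.

Local Notation lower := (lower_span lt C l).

Lemma lower_spanE (c : forall m, M m -> M m -> R) i :
  (\sum_(m | lt m l) \sum_(s : M m) \sum_(t : M m) fsc (c m s t) (C m s t)) i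
  = \sum_(m | lt m l) \sum_(s : M m) \sum_(t : M m) c m s t * C m s t i.
Proof.
rewrite sum_ffunE; apply: eq_bigr => m _; rewrite sum_ffunE; apply: eq_bigr => s _.
by rewrite sum_ffunE; apply: eq_bigr => t _; rewrite fscE.
Qed.

Lemma lower_span0 : lower 0.
Proof.
exists (fun _ _ _ => 0); apply/ffunP => i; rewrite lower_spanE ffunE.
by rewrite big1 // => m _; rewrite big1 // => s _; rewrite big1 // => t _; rewrite mul0r.
Qed.

Lemma lower_spanD v w : lower v -> lower w -> lower (v + w).
Proof.
move=> [c1 ->] [c2 ->]; exists (fun m s t => c1 m s t + c2 m s t).
apply/ffunP => i; rewrite ffunE !lower_spanE -big_split; apply: eq_bigr => m _.
rewrite -big_split; apply: eq_bigr => s _; rewrite -big_split; apply: eq_bigr => t _.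
by rewrite mulrDl.
Qed.

Lemma lower_spanZ k v : lower v -> lower (fsc k v).
Proof.
move=> [c ->]; exists (fun m s t => k * c m s t).
apply/ffunP => i; rewrite fscE !lower_spanE mulr_sumr; apply: eq_bigr => m _.
rewrite mulr_sumr; apply: eq_bigr => s _; rewrite mulr_sumr; apply: eq_bigr => t _.
by rewrite mulrA.
Qed.

Lemma lower_spanB v w : lower v -> lower w -> lower (v - w).
Proof. by move=> hv hw; rewrite -fscN1; apply/lower_spanD/lower_spanZ. Qed.

Lemma lower_span_sum (J : Type) (r : seq J) (P : pred J) (F : J -> {ffun I -> R}) :
  (forall j, P j -> lower (F j)) -> lower (\sum_(j <- r | P j) F j).
Proof. by move=> h; apply: big_ind => //; [exact: lower_span0 | exact: lower_spanD]. Qed.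

Let index_pair (m : Lam) : eqType := (M m * M m)%type.

Lemma lower_span_basis m (x y : M m) k : lt m l -> lower (fsc k (C m x y)).
Proof.
move=> hm; exists (fun m' s t =>
  if Tagged index_pair ((s, t) : index_pair m') == Tagged index_pair ((x, y) : index_pair m)
  then k else 0).
apply/ffunP => i; rewrite lower_spanE fscE (bigD1 m) //= [X in _ + X]big1; last first.
  move=> m' /andP[_ ne]; rewrite big1 // => s _; rewrite big1 // => t _.
  case: eqP => [/(congr1 tag) /= E|]; last by rewrite mul0r.
  by rewrite E eqxx in ne.
rewrite addr0 (bigD1 x) //= [X in _ + X]big1; last first.
  move=> s ne; rewrite big1 // => t _; rewrite eq_Tagged /=.
  by rewrite xpair_eqE (negbTE ne) mul0r.
rewrite addr0 (bigD1 y) //= [X in _ + X]big1; last first.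
  by move=> t ne; rewrite eq_Tagged /= xpair_eqE (negbTE ne) andbF mul0r.
by rewrite addr0 eq_Tagged /= !eqxx.
Qed.

Lemma lower_span_congr a b c : lower (a - b) -> lower (a - c) <-> lower (b - c).
Proof.
move=> h; split => h2.
- have -> : b - c = (a - c) - (a - b) by apply/esym; rewrite opprB addrC -addrA addKr.
  exact: lower_spanB.
- have -> : a - c = (a - b) + (b - c) by rewrite addrA subrK.
  exact: lower_spanD.
Qed.

End LowerSpan.

Section TwistedProduct.
Variables (R : comPzRingType) (S : finType) (mul : S -> S -> S) (alpha : S -> S -> R).

Local Notation "f ** g" := (tmul mul alpha f g) (at level 40).

Lemma tmulE f g z :
  (f ** g) z = \sum_x \sum_y (mul x y == z)%:R * (alpha x y * f x * g y).
Proof.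
rewrite ffunE; apply: eq_bigr => x _; rewrite big_mkcond /=; apply: eq_bigr => y _.
by case: eqP; rewrite ?mul1r ?mul0r.
Qed.

Lemma tmul_suml (J : finType) (F : J -> {ffun S -> R}) g :
  (\sum_j F j) ** g = \sum_j F j ** g.
Proof.
apply/ffunP => z; rewrite tmulE [RHS]sum_ffunE.
under [RHS]eq_bigr => j _ do rewrite tmulE.
rewrite [RHS]exchange_big /=; apply: eq_bigr => x _.
rewrite [RHS]exchange_big /=; apply: eq_bigr => y _.
by rewrite sum_ffunE mulr_sumr !mulr_suml mulr_sumr.
Qed.

Lemma tmul_sumr (J : finType) f (G : J -> {ffun S -> R}) :
  f ** (\sum_j G j) = \sum_j f ** G j.
Proof.
apply/ffunP => z; rewrite tmulE [RHS]sum_ffunE.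
under [RHS]eq_bigr => j _ do rewrite tmulE.
rewrite [RHS]exchange_big /=; apply: eq_bigr => x _.
rewrite [RHS]exchange_big /=; apply: eq_bigr => y _.
by rewrite sum_ffunE !mulr_sumr.
Qed.

Lemma tmul_fsc a b f g : fsc a f ** fsc b g = fsc (a * b) (f ** g).
Proof.
apply/ffunP => z; rewrite fscE !tmulE mulr_sumr; apply: eq_bigr => x _.
by rewrite mulr_sumr; apply: eq_bigr => y _; rewrite !fscE; ring.
Qed.

Lemma tmul_delta x y : delta R x ** delta R y = fsc (alpha x y) (delta R (mul x y)).
Proof.
apply/ffunP => z; rewrite tmulE fscE deltaE (bigD1 x) //= [X in _ + X]big1; last first.
  by move=> x' ne; rewrite big1 // => y' _; rewrite deltaE (negbTE ne) mulr0 mul0r mulr0.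
rewrite addr0 (bigD1 y) //= [X in _ + X]big1; last first.
  by move=> y' ne; rewrite !deltaE (negbTE ne) mulr0 mulr0.
by rewrite addr0 !deltaE !eqxx !mulr1 eq_sym mulrC.
Qed.

Lemma tmul_sum_delta (J K : finType) (a : J -> R) (x : J -> S) (b : K -> R) (y : K -> S) :
  (\sum_j fsc (a j) (delta R (x j))) ** (\sum_k fsc (b k) (delta R (y k)))
  = \sum_j \sum_k fsc (alpha (x j) (y k) * a j * b k) (delta R (mul (x j) (y k))).
Proof.
rewrite tmul_suml; apply: eq_bigr => j _; rewrite tmul_sumr; apply: eq_bigr => k _.
rewrite tmul_fsc tmul_delta.
by apply/ffunP => z; rewrite !fscE; ring.
Qed.

End TwistedProduct.

Section Semigroup.
Variables (S : finType) (mul : S -> S -> S).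
Hypothesis mulA : forall x y z, mul x (mul y z) = mul (mul x y) z.

Definition mul1 (a b : option S) : option S :=
  match a, b with
  | Some a, Some b => Some (mul a b)
  | Some a, None => Some a
  | None, b => b
  end.

Lemma lmul1_mul1 a b z : lmul1 mul a (lmul1 mul b z) = lmul1 mul (mul1 a b) z.
Proof. by case: a => [a|]; case: b => [b|] //=; rewrite mulA. Qed.

Lemma rmul1_mul1 z a b : rmul1 mul (rmul1 mul z a) b = rmul1 mul z (mul1 a b).
Proof. by case: a => [a|]; case: b => [b|] //=; rewrite mulA. Qed.

Lemma lrmul1A a y b : rmul1 mul (lmul1 mul a y) b = lmul1 mul a (rmul1 mul y b).
Proof. by case: a => [a|]; case: b => [b|] //=; rewrite mulA. Qed.

Lemma Lle_refl x : Lle mul x x.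
Proof. by apply/existsP; exists None. Qed.

Lemma Jle_refl x : Jle mul x x.
Proof. by apply/existsP; exists None; apply/existsP; exists None. Qed.

Lemma Lle_trans y x z : Lle mul x y -> Lle mul y z -> Lle mul x z.
Proof.
move=> /existsP[a /eqP->] /existsP[b /eqP->]; apply/existsP.
by exists (mul1 a b); rewrite lmul1_mul1.
Qed.

Lemma Jle_trans y x z : Jle mul x y -> Jle mul y z -> Jle mul x z.
Proof.
move=> /existsP[a /existsP[b /eqP->]] /existsP[c /existsP[d /eqP->]].
apply/existsP; exists (mul1 a c); apply/existsP; exists (mul1 d b).
by rewrite !lrmul1A rmul1_mul1 lmul1_mul1.
Qed.

Lemma Lle_Jle x y : Lle mul x y -> Jle mul x y.
Proof. by move=> /existsP[a /eqP->]; apply/existsP; exists a; apply/existsP; exists None. Qed.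

Lemma Lrel_sym x y : Lrel mul x y = Lrel mul y x.
Proof. by rewrite /Lrel andbC. Qed.

Lemma Lrel_trans y x z : Lrel mul x y -> Lrel mul y z -> Lrel mul x z.
Proof. by move=> /andP[a b] /andP[c d]; rewrite /Lrel (Lle_trans a c) (Lle_trans d b). Qed.

Lemma Lrel_Jrel x y : Lrel mul x y -> Jrel mul x y.
Proof. by case/andP=> a b; rewrite /Jrel !Lle_Jle. Qed.

Lemma Jrel_sym x y : Jrel mul x y = Jrel mul y x.
Proof. by rewrite /Jrel andbC. Qed.

Lemma Jrel_trans y x z : Jrel mul x y -> Jrel mul y z -> Jrel mul x z.
Proof. by move=> /andP[a b] /andP[c d]; rewrite /Jrel (Jle_trans a c) (Jle_trans d b). Qed.

(* A local unit on either side removes the adjoined identity from [x <=_L y]. *)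
Lemma LleS x y f :
  x = mul f x \/ y = mul f y -> Lle mul x y -> exists a, x = mul a y.
Proof.
move=> hf /existsP[[a|] /eqP /= E]; first by exists a.
by exists f; case: hf; rewrite E.
Qed.

Lemma RleS x y f :
  x = mul x f \/ y = mul y f -> Rle mul x y -> exists a, x = mul y a.
Proof.
move=> hf /existsP[[a|] /eqP /= E]; first by exists a.
by exists f; case: hf; rewrite E.
Qed.

Lemma Dcl_Jrel (D : Dcl mul) x y : x \in val D -> y \in val D -> Jrel mul x y.
Proof.
case: D => D /= /existsP[x0 /eqP ->]; rewrite !inE => h1 h2.
by apply: Jrel_trans h2; rewrite Jrel_sym.
Qed.

Lemma Dcl_closed (D : Dcl mul) x y : x \in val D -> Jrel mul x y -> y \in val D.
Proof.
case: D => D /= /existsP[x0 /eqP ->]; rewrite !inE => h1 h2.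
exact: Jrel_trans h2.
Qed.

Lemma Dcl_eq (D1 D2 : Dcl mul) x : x \in val D1 -> x \in val D2 -> D1 = D2.
Proof.
move=> h1 h2; apply: val_inj; apply/setP => y; apply/idP/idP => hy.
- by apply: (Dcl_closed h2); apply: Dcl_Jrel h1 hy.
- by apply: (Dcl_closed h1); apply: Dcl_Jrel h2 hy.
Qed.

Lemma Dlt_irr (D : Dcl mul) : ~~ Dlt mul (val D) (val D).
Proof.
apply/negP => /existsP[x /andP[hx /existsP[y /andP[hy /andP[_ /negP hn]]]]].
by apply: hn; case/andP: (Dcl_Jrel hy hx).
Qed.

Lemma Lcl_closed (D : Dcl mul) (L : Lcl D) x y :
  x \in val L -> Lrel mul x y -> y \in val L.
Proof.
case: L => L /= /andP[/existsP[x0 /eqP ->] _]; rewrite !inE => h1 h2.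
exact: Lrel_trans h2.
Qed.

Lemma Lcl_Lrel (D : Dcl mul) (L : Lcl D) x y :
  x \in val L -> y \in val L -> Lrel mul x y.
Proof.
case: L => L /= /andP[/existsP[x0 /eqP ->] _]; rewrite !inE => h1 h2.
by apply: Lrel_trans h2; rewrite Lrel_sym.
Qed.

Lemma Lcl_eq (D : Dcl mul) (L1 L2 : Lcl D) x : x \in val L1 -> x \in val L2 -> L1 = L2.
Proof.
move=> h1 h2; apply: val_inj; apply/setP => y; apply/idP/idP => hy.
- by apply: (Lcl_closed h2); apply: Lcl_Lrel h1 hy.
- by apply: (Lcl_closed h1); apply: Lcl_Lrel h2 hy.
Qed.

Lemma Lcl_sub (D : Dcl mul) (L : Lcl D) x : x \in val L -> x \in val D.
Proof. by case: L => L /= /andP[_ /subsetP]; apply. Qed.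

Lemma Lcl_of (D : Dcl mul) x : x \in val D -> {L : Lcl D | x \in val L}.
Proof.
move=> hx.
have hL : is_Lclass mul [set y | Lrel mul x y] && ([set y | Lrel mul x y] \subset val D).
  apply/andP; split; first by apply/existsP; exists x.
  by apply/subsetP => y; rewrite inE => /Lrel_Jrel; apply: Dcl_closed.
exists (exist (fun X : {set S} => is_Lclass mul X && (X \subset val D)) _ hL).
by rewrite /= inE /Lrel Lle_refl.
Qed.

Lemma below_Dcl (D : Dcl mul) q z : z \in val D -> Jle mul q z -> ~~ Jle mul z q ->
  exists D1 : Dcl mul, [/\ q \in val D1, Dlt mul (val D1) (val D) & D1 != D].
Proof.
move=> hz qz zq.
have hD : is_Dclass mul [set y | Jrel mul q y] by apply/existsP; exists q.
exists (exist (fun X : {set S} => is_Dclass mul X) _ hD).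
rewrite /= inE /Jrel Jle_refl; split => //.
- apply/existsP; exists q; rewrite inE /Jrel Jle_refl /=.
  by apply/existsP; exists z; rewrite hz qz.
- apply/eqP => /(congr1 val) /= ED.
  have : z \in [set y | Jrel mul q y] by rewrite ED.
  by rewrite inE /Jrel (negbTE zq) andbF.
Qed.

Section AntiInvolution.
Variable star : S -> S.
Hypothesis starK : forall x, star (star x) = x.
Hypothesis starM : forall x y, star (mul x y) = mul (star y) (star x).

Lemma Jle_star x y : Jle mul x y -> Jle mul (star x) (star y).
Proof.
move=> /existsP[a /existsP[b /eqP->]]; apply/existsP; exists (omap star b).
apply/existsP; exists (omap star a).
by case: a => [a|]; case: b => [b|] //=; rewrite ?starM ?mulA.
Qed.

Lemma Jrel_star x y : Jrel mul x y -> Jrel mul (star x) (star y).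
Proof. by move=> /andP[a b]; rewrite /Jrel !Jle_star. Qed.

Lemma Lle_star x y : Lle mul x y -> Rle mul (star x) (star y).
Proof.
move=> /existsP[[a|] /eqP ->]; apply/existsP; last by exists None.
by exists (Some (star a)); rewrite /= starM.
Qed.

Section Idempotents.
Variable one : Dcl mul -> S.
Hypothesis one_idem : forall D, mul (one D) (one D) = one D.
Hypothesis one_star : forall D, star (one D) = one D.

(* Elementwise descriptions of L_D, of L_D^* (the R-class of 1_D) and of
   G_D (the H-class of 1_D). *)
Definition inLD D x := x = mul x (one D) /\ exists a, one D = mul a x.
Definition inRD D x := x = mul (one D) x /\ exists b, one D = mul x b.
Definition inGD D x := inLD D x /\ inRD D x.

Lemma LDP D x : x \in LD one D <-> inLD D x.
Proof.
rewrite inE; split.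
- move=> /andP[le_x1 le_1x]; split.
  + by case/existsP: le_x1 => [[a|] /eqP ->] /=; rewrite -?mulA one_idem.
  + by apply: (LleS (f := one D)) le_1x; left; rewrite one_idem.
- case=> h1 [a h2]; apply/andP; split; apply/existsP.
  + by exists (Some x); rewrite /= -h1.
  + by exists (Some a); rewrite /= -h2.
Qed.

Lemma inLD_star D x : inLD D x -> inRD D (star x).
Proof.
case=> h1 [a h2]; split; first by rewrite -one_star -starM -h1.
by exists (star a); rewrite -starM -h2 one_star.
Qed.

Lemma inRD_star D x : inRD D x -> inLD D (star x).
Proof.
case=> h1 [a h2]; split; first by rewrite -one_star -starM -h1.
by exists (star a); rewrite -starM -h2 one_star.
Qed.

Lemma inGD_star D x : inGD D x -> inGD D (star x).
Proof. by case=> h1 h2; split; [apply: inRD_star | apply: inLD_star]. Qed.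

Lemma LDsP D x : x \in LDs star one D <-> inRD D x.
Proof.
split.
- by case/imsetP=> y /LDP hy ->; apply: inLD_star.
- move=> h; apply/imsetP; exists (star x); last by rewrite starK.
  by apply/LDP; apply: inRD_star.
Qed.

Lemma GDP D x : x \in GD star one D <-> inGD D x.
Proof.
rewrite inE; split.
- by case/andP=> /LDP h1 /LDsP h2.
- by case=> /LDP h1 /LDsP h2; rewrite h1 h2.
Qed.

Lemma Rrel_inRD D x : Rrel mul x (one D) -> inRD D x.
Proof.
move=> /andP[le_x1 le_1x]; split.
- by case/existsP: le_x1 => [[b|] /eqP ->] /=; rewrite ?mulA one_idem.
- by apply: (RleS (f := one D)) le_1x; left; rewrite one_idem.
Qed.

Lemma inLD_mulG D x g : inLD D x -> inGD D g -> inLD D (mul x g).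
Proof.
case=> hx [a ha] [[hg1 [c hc]] [hg2 _]]; split; first by rewrite -mulA -hg1.
by exists (mul c a); rewrite -mulA (mulA a) -ha -hg2.
Qed.

Lemma inRD_mulG D g y : inGD D g -> inRD D y -> inRD D (mul g y).
Proof.
move=> hg hy; have := inLD_mulG (inRD_star hy) (inGD_star hg).
by rewrite -starM => /inLD_star; rewrite starK.
Qed.

Lemma inGD_mul D g h : inGD D g -> inGD D h -> inGD D (mul g h).
Proof.
move=> hg hh; split; first by apply: inLD_mulG => //; case: hg.
by apply: inRD_mulG => //; case: hh.
Qed.

Lemma Jle_oneP D q : Jle mul (one D) q -> exists a b, one D = mul (mul a q) b.
Proof.
move=> /existsP[a /existsP[b /eqP E]].
have E1 : one D = mul (mul (one D) (one D)) (one D) by rewrite !one_idem.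
rewrite {3}E {E} in E1; case: a E1 => [a|]; case: b => [b|] /= E1.
- by exists (mul (one D) a), (mul b (one D)); rewrite {1}E1 !mulA.
- by exists (mul (one D) a), (one D); rewrite {1}E1 !mulA.
- by exists (one D), (mul b (one D)); rewrite {1}E1 !mulA.
- by exists (one D), (one D).
Qed.

Lemma inGD_of_Jle D p : mul (one D) p = p -> mul p (one D) = p ->
  Jle mul (one D) p -> inGD D p.
Proof.
move=> ep pe /Jle_oneP[a [b E]]; split; split => //.
- have E1 : one D = mul (mul (mul a p) (one D)) b by rewrite -(mulA a) pe.
  case: (sandwich_fixL mulA E1) => [E2|[c E2]].
  + by exists a; rewrite {1}E2 -!mulA pe.
  + by exists (mul c a); rewrite {1}E2 -!mulA pe.
- have E1 : one D = mul (mul a (one D)) (mul p b) by rewrite -mulA (mulA (one D)) ep mulA.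
  case: (sandwich_fixR mulA E1) => [E2|[c E2]].
  + by exists b; rewrite {1}E2 !mulA ep.
  + by exists (mul b c); rewrite {1}E2 !mulA ep.
Qed.

Section Representatives.
Variable u : {set S} -> S.
Hypothesis one_in : forall D, one D \in val D.
Hypothesis u_in : forall (D : Dcl mul) (L : Lcl D), u (val L) \in val L.
Hypothesis u_R : forall (D : Dcl mul) (L : Lcl D), Rrel mul (u (val L)) (one D).

Definition uprod (D : Dcl mul) (L : Lcl D) g (K : Lcl D) :=
  mul (mul (star (u (val L))) g) (u (val K)).

Lemma u_inRD D (L : Lcl D) : inRD D (u (val L)).
Proof. exact: Rrel_inRD. Qed.

Lemma ustar_inLD D (L : Lcl D) : inLD D (star (u (val L))).
Proof. exact/inRD_star/u_inRD. Qed.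

Lemma uprod_star D (L K : Lcl D) g : star (uprod L g K) = uprod K (star g) L.
Proof. by rewrite /uprod !starM starK mulA. Qed.

Lemma uprod_inK D (L K : Lcl D) g : inGD D g -> uprod L g K \in val K.
Proof.
move=> [[_ [z hz]] [hg _]]; apply: (Lcl_closed (u_in K)).
have [w1 _] := u_inRD K; have [_ [a ha]] := ustar_inLD L.
apply/andP; split; apply/existsP; last by exists (Some (mul (star (u (val L))) g)).
exists (Some (mul z a)); apply/eqP => /=.
by rewrite /uprod !mulA -(mulA z) -ha -(mulA z) -hg -hz -w1.
Qed.

Lemma uprod_star_inL D (L K : Lcl D) g : inGD D g -> star (uprod L g K) \in val L.
Proof. by move=> hg; rewrite uprod_star; apply/uprod_inK/inGD_star. Qed.

Lemma uprod_inD D (L K : Lcl D) g : inGD D g -> uprod L g K \in val D.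
Proof. by move=> hg; apply: (@Lcl_sub D K); apply: uprod_inK. Qed.

Lemma uprod_inj D (L1 K1 L2 K2 : Lcl D) g1 g2 : inGD D g1 -> inGD D g2 ->
  uprod L1 g1 K1 = uprod L2 g2 K2 -> [/\ L1 = L2, K1 = K2 & g1 = g2].
Proof.
move=> h1 h2 E.
have eK : K1 = K2.
  apply: (Lcl_eq (x := uprod L1 g1 K1)); first exact: uprod_inK.
  by rewrite E; apply: uprod_inK.
have eL : L1 = L2.
  apply: (Lcl_eq (x := star (uprod L1 g1 K1))); first exact: uprod_star_inL.
  by rewrite E; apply: uprod_star_inL.
subst; split => //; move: E.
have [_ [a ha]] := ustar_inLD L2; have [_ [b hb]] := u_inRD K2.
have unfold g : inGD D g -> g = mul (mul a (uprod L2 g K2)) b.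
  move=> [[gr _] [gl _]].
  by rewrite /uprod -!mulA -hb -gr !mulA -ha -gl.
by move=> E; rewrite (unfold _ h1) (unfold _ h2) E.
Qed.

Lemma uprod_surj (D : Dcl mul) x : x \in val D ->
  exists (L K : Lcl D) g, inGD D g /\ x = uprod L g K.
Proof.
move=> hx.
have hxs : star x \in val D.
  apply: (Dcl_closed (one_in D)); rewrite -(one_star D); apply: Jrel_star.
  exact: Dcl_Jrel (one_in D) hx.
have [L hL] := Lcl_of hxs; have [K hK] := Lcl_of hx.
set v := star (u (val L)); set w := u (val K).
have [v1 _] := ustar_inLD L; have [w1 [b hb]] := u_inRD K.
have [_ [a ha]] := u_inRD L.
have av : one D = mul (star a) v by rewrite /v -starM -ha one_star.
have [c hc] : exists c, x = mul v c.
  apply: (RleS (f := one D)); first by right.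
  by rewrite -[x]starK; apply: Lle_star; case/andP: (Lcl_Lrel hL (u_in L)).
have [d hd] : exists d, x = mul d w.
  by apply: (LleS (f := one D)); [right | case/andP: (Lcl_Lrel hK (u_in K))].
have vax : mul v (mul (star a) x) = x by rewrite {1}hc !mulA -(mulA v) -av -v1 -hc.
have xbw : mul (mul x b) w = x by rewrite {1}hd -!mulA (mulA w) -hb -w1 -hd.
pose g := mul (mul (one D) (mul (mul (star a) x) b)) (one D).
have x_eq : x = uprod L g K.
  by rewrite /uprod /g !mulA -v1 -(mulA _ (one D) w) -w1 -(mulA v) vax xbw.
exists L, K, g; split => //; apply: inGD_of_Jle.
- by rewrite /g !mulA one_idem.
- by rewrite /g -mulA one_idem.
- apply: (Jle_trans (y := x)); first by case/andP: (Dcl_Jrel (one_in D) hx).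
  apply/existsP; exists (Some v); apply/existsP; exists (Some w); exact/eqP.
Qed.

Lemma uprod_mul_below D (L' L K K' : Lcl D) g h : inGD D g -> inGD D h ->
  ~ inGD D (mul (u (val L)) (star (u (val K)))) ->
  exists D1 : Dcl mul, [/\ mul (uprod L' g L) (uprod K h K') \in val D1,
                          Dlt mul (val D1) (val D) & D1 != D].
Proof.
move=> hg hh hp; set p := mul (u (val L)) (star (u (val K))).
set v' := star (u (val L')); set w' := u (val K').
have q_eq : mul (uprod L' g L) (uprod K h K') = mul (mul (mul v' g) p) (mul h w').
  by rewrite /uprod /p !mulA.
have [v'1 _] := ustar_inLD L'; have [u1 _] := u_inRD L; have [v1 _] := ustar_inLD K.
apply: below_Dcl (one_in D) _ _.
- apply/existsP; exists (Some v'); apply/existsP; exists (Some (mul (mul g p) (mul h w'))).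
  by apply/eqP; rewrite q_eq /= -v'1 !mulA.
- apply/negP => le1q; apply: hp; apply: inGD_of_Jle.
  + by rewrite /p mulA -u1.
  + by rewrite /p -mulA -v1.
  + apply: (Jle_trans le1q); apply/existsP; exists (Some (mul v' g)).
    by apply/existsP; exists (Some (mul h w')); rewrite q_eq.
Qed.

Section CellularTransfer.
Local Unset Implicit Arguments.
Variables (R : comPzRingType) (alpha : S -> S -> R).
Hypothesis alpha_star : forall x y, alpha x y = alpha (star y) (star x).
Variable beta : Dcl mul -> S -> S -> R.
Hypothesis beta_unit : forall D x y, x \in LD one D -> y \in LDs star one D ->
      exists b, beta D x y * b = 1.
Hypothesis beta_tw : forall D x y z,
      x \in LD one D -> y \in LD one D -> y \in LDs star one D ->
      mul x y \in LD one D -> z \in LDs star one D -> mul y z \in LDs star one D ->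
      beta D x y * beta D (mul x y) z = beta D x (mul y z) * beta D y z.
Hypothesis alpha_beta : forall D x y z,
      mul x y \in LD one D -> y \in LD one D -> z \in LDs star one D ->
      alpha x y * beta D (mul x y) z = alpha x (mul y z) * beta D y z.
Hypothesis beta_star : forall D x y, x \in LD one D -> y \in LDs star one D ->
      beta D x y = beta D (star y) (star x).
Variables (Lam : Dcl mul -> finType) (le : forall D, rel (Lam D)).
Variables (M : forall D, Lam D -> finType).
Variables (C : forall D (l : Lam D), M D l -> M D l -> {ffun Gt star one D -> R}).
Hypothesis cellD : forall D,
  is_cellular (@gmul R S mul star one D (beta D)) (@gstar R S mul star one D) (le D) (C D).
Local Set Implicit Arguments.

Local Notation G D := (Gt star one D).
Local Notation "f ** g" := (tmul mul alpha f g) (at level 40).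

Let beta_unit_in D x y : inLD D x -> inRD D y -> exists b, beta D x y * b = 1.
Proof. by move=> hx hy; apply: beta_unit; [apply/LDP | apply/LDsP]. Qed.

Let beta_tw_in D x y z : inLD D x -> inGD D y -> inLD D (mul x y) -> inRD D z ->
  inRD D (mul y z) -> beta D x y * beta D (mul x y) z = beta D x (mul y z) * beta D y z.
Proof.
move=> hx [hyl hyr] hxy hz hyz.
by apply: beta_tw; [apply/LDP | apply/LDP | apply/LDsP | apply/LDP | apply/LDsP | apply/LDsP].
Qed.

Let alpha_beta_in D x y z : inLD D (mul x y) -> inLD D y -> inRD D z ->
  alpha x y * beta D (mul x y) z = alpha x (mul y z) * beta D y z.
Proof. by move=> hxy hy hz; apply: alpha_beta; [apply/LDP | apply/LDP | apply/LDsP]. Qed.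

Let beta_star_in D x y : inLD D x -> inRD D y -> beta D x y = beta D (star y) (star x).
Proof. by move=> hx hy; apply: beta_star; [apply/LDP | apply/LDsP]. Qed.

Lemma alpha_beta_swap D y w v : inLD D y -> inRD D w -> inLD D v -> inGD D (mul w v) ->
  alpha (mul y w) v * beta D y w = alpha w v * beta D y (mul w v).
Proof.
move=> hy hw hv [hwvl hwvr].
rewrite alpha_star starM (beta_star_in hy hw) -alpha_beta_in.
- by rewrite -starM -beta_star_in // -alpha_star.
- by rewrite -starM; apply: inRD_star.
- exact: inRD_star.
- exact: inLD_star.
Qed.

Lemma beta_cocycle D v' g w v h w' :
  inLD D v' -> inGD D g -> inRD D w -> inLD D v -> inGD D h -> inRD D w' ->
  inGD D (mul w v) ->
  beta D v' g * beta D (mul v' g) w * (beta D v h * beta D (mul v h) w') *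
    alpha (mul (mul v' g) w) (mul (mul v h) w')
  = alpha w v * beta D g (mul w v) * beta D (mul g (mul w v)) h *
    (beta D v' (mul (mul g (mul w v)) h) * beta D (mul v' (mul (mul g (mul w v)) h)) w').
Proof.
move=> hv' hg hw hv hh hw' hp.
have hv'g := inLD_mulG hv' hg; have hgp := inGD_mul hg hp; have hgph := inGD_mul hgp hh.
set x := mul (mul v' g) w; set p := mul w v; set q := mul g p.
have xv : mul x v = mul v' q by rewrite /x /q /p !mulA.
have xvh : mul x (mul v h) = mul v' (mul q h) by rewrite /x /q /p !mulA.
have E1 : alpha x (mul (mul v h) w') * beta D (mul v h) w' =
          alpha x (mul v h) * beta D (mul x (mul v h)) w'.
  by rewrite alpha_beta_in // ?xvh; [apply: inLD_mulG | apply: inLD_mulG].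
have E2 : alpha x (mul v h) * beta D v h = alpha x v * beta D (mul x v) h.
  by rewrite alpha_beta_in // ?xv; [apply: inLD_mulG | case: hh].
have E3 : alpha x v * beta D (mul v' g) w = alpha w v * beta D (mul v' g) p.
  exact: alpha_beta_swap.
have T1 : beta D v' g * beta D (mul v' g) p = beta D v' q * beta D g p.
  by rewrite beta_tw_in //; [case: hp | case: hgp].
have T2 : beta D v' q * beta D (mul v' q) h = beta D v' (mul q h) * beta D q h.
  by rewrite beta_tw_in //; [exact: inLD_mulG | case: hh | case: hgph].
transitivity (beta D v' g * beta D (mul v' g) w * beta D v h *
  (alpha x (mul (mul v h) w') * beta D (mul v h) w')); first by ring.
rewrite E1; transitivity (beta D v' g * beta D (mul v' g) w *
  (alpha x (mul v h) * beta D v h) * beta D (mul x (mul v h)) w'); first by ring.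
rewrite E2; transitivity (beta D v' g * (alpha x v * beta D (mul v' g) w) *
  beta D (mul x v) h * beta D (mul x (mul v h)) w'); first by ring.
rewrite E3 xv xvh; transitivity (alpha w v * (beta D v' g * beta D (mul v' g) p) *
  beta D (mul v' q) h * beta D (mul v' (mul q h)) w'); first by ring.
rewrite T1; transitivity (alpha w v * beta D g p *
  (beta D v' q * beta D (mul v' q) h) * beta D (mul v' (mul q h)) w'); first by ring.
by rewrite T2; ring.
Qed.

Lemma valG D (g : G D) : inGD D (val g).
Proof. by apply/GDP; exact: valP. Qed.

Lemma gprod_subproof D (g h : G D) : mul (val g) (val h) \in GD star one D.
Proof. exact/GDP/inGD_mul/valG/valG. Qed.

Definition gprod D (g h : G D) : G D :=
  exist (fun x => x \in GD star one D) _ (gprod_subproof g h).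

Lemma sum_val_eq D (w : G D) (F : G D -> R) : \sum_x (val w == val x)%:R * F x = F w.
Proof.
rewrite (bigD1 w) //= [X in _ + X]big1 ?eqxx ?mul1r ?addr0 // => x ne.
by rewrite eq_sym (inj_eq val_inj) (negbTE ne) mul0r.
Qed.

Lemma sum_val_eq2 D (w : G D -> G D -> G D) (c : G D -> G D -> R) (F : G D -> R) :
  \sum_z (\sum_g \sum_h (val (w g h) == val z)%:R * c g h) * F z
  = \sum_g \sum_h c g h * F (w g h).
Proof.
under eq_bigr => z _ do rewrite mulr_suml.
rewrite exchange_big; apply: eq_bigr => g _.
under eq_bigr => z _ do rewrite mulr_suml.
rewrite exchange_big; apply: eq_bigr => h _.
under eq_bigr => z _ do rewrite -mulrA.
by rewrite sum_val_eq.
Qed.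

Lemma gmulE D (f f' : {ffun G D -> R}) z : gmul (beta D) f f' z =
  \sum_x \sum_y (mul (val x) (val y) == val z)%:R * (beta D (val x) (val y) * f x * f' y).
Proof.
rewrite ffunE; apply: eq_bigr => x _; rewrite big_mkcond /=; apply: eq_bigr => y _.
by case: eqP; rewrite ?mul1r ?mul0r.
Qed.

Lemma gmul0r D (f : {ffun G D -> R}) : gmul (beta D) 0 f = 0.
Proof.
apply/ffunP => z; rewrite gmulE ffunE big1 // => x _; rewrite big1 // => y _.
by rewrite ffunE mulr0 mul0r mulr0.
Qed.

Lemma gmulr0 D (f : {ffun G D -> R}) : gmul (beta D) f 0 = 0.
Proof.
apply/ffunP => z; rewrite gmulE ffunE big1 // => x _; rewrite big1 // => y _.
by rewrite ffunE !mulr0.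
Qed.

(* Not written with [embc], so that [bigC] is convertibly [emb] applied to [C]. *)
Definition emb D (L K : Lcl D) (f : {ffun G D -> R}) : {ffun S -> R} :=
  \sum_(g : G D) fsc (f g * beta D (star (u (val L))) (val g) *
                       beta D (mul (star (u (val L))) (val g)) (u (val K)))
                     (delta R (uprod L (val g) K)).

Definition embc D (L K : Lcl D) (g : G D) :=
  beta D (star (u (val L))) (val g) * beta D (mul (star (u (val L))) (val g)) (u (val K)).

Lemma embE D (L K : Lcl D) f z :
  emb L K f z = \sum_g f g * embc L K g * (z == uprod L (val g) K)%:R.
Proof. by rewrite sum_fsc_deltaE; apply: eq_bigr => g _; rewrite /embc !mulrA. Qed.

Lemma embD D (L K : Lcl D) f f' : emb L K (f + f') = emb L K f + emb L K f'.
Proof.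
apply/ffunP => z; rewrite ffunE !embE -big_split; apply: eq_bigr => g _.
by rewrite ffunE /= !mulrDl.
Qed.

Lemma embZ D (L K : Lcl D) c f : emb L K (fsc c f) = fsc c (emb L K f).
Proof.
apply/ffunP => z; rewrite fscE !embE mulr_sumr; apply: eq_bigr => g _.
by rewrite fscE; ring.
Qed.

Lemma emb0 D (L K : Lcl D) : emb L K 0 = 0.
Proof. by apply/ffunP => z; rewrite embE ffunE big1 // => g _; rewrite ffunE !mul0r. Qed.

Lemma embB D (L K : Lcl D) f f' : emb L K (f - f') = emb L K f - emb L K f'.
Proof. by rewrite embD -!fscN1 embZ. Qed.

Lemma emb_sum D (L K : Lcl D) (J : Type) (r : seq J) (P : pred J) F :
  emb L K (\sum_(j <- r | P j) F j) = \sum_(j <- r | P j) emb L K (F j).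
Proof. exact: (big_morph _ (embD L K) (emb0 L K)). Qed.

Lemma emb_uprod D (L K L' K' : Lcl D) f g :
  emb L K f (uprod L' (val g) K') =
  if (L == L') && (K == K') then f g * embc L' K' g else 0.
Proof.
rewrite embE; case: ifP => [/andP[/eqP -> /eqP ->]|hne].
  rewrite (bigD1 g) //= [X in _ + X]big1 ?eqxx ?mulr1 ?addr0 // => h ne.
  case: eqP; rewrite ?mulr0 // => /esym /(uprod_inj (valG h) (valG g)) [_ _ /val_inj E].
  by rewrite E eqxx in ne.
apply: big1 => h _; case: eqP; rewrite ?mulr0 // => /(uprod_inj (valG g) (valG h)) [E1 E2 _].
by rewrite E1 E2 !eqxx in hne.
Qed.

Lemma emb_delta D (L K : Lcl D) (g : G D) :
  emb L K (delta R g) = fsc (embc L K g) (delta R (uprod L (val g) K)).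
Proof.
apply/ffunP => z; rewrite embE fscE deltaE (bigD1 g) //= [X in _ + X]big1 ?addr0.
  by rewrite deltaE eqxx mul1r.
by move=> h ne; rewrite deltaE (negbTE ne) !mul0r.
Qed.

Lemma embc_unit D (L K : Lcl D) g : exists b, embc L K g * b = 1.
Proof.
have [hgl hgr] := valG g.
have [b1 h1] := beta_unit_in (ustar_inLD L) hgr.
have [b2 h2] := beta_unit_in (inLD_mulG (ustar_inLD L) (valG g)) (u_inRD K).
by exists (b1 * b2); rewrite /embc mulrACA h1 h2 mulr1.
Qed.

Section SandwichProduct.
Variables (D : Dcl mul) (L' L K K' : Lcl D).
Local Notation p := (mul (u (val L)) (star (u (val K)))).
Local Notation P := (sandwich star one alpha u L K).

Lemma gmul_sandwichE (p0 : G D) : val p0 = p -> forall f x,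
  gmul (beta D) f P x = \sum_g (val (gprod g p0) == val x)%:R *
    (beta D (val g) p * f g * alpha (u (val L)) (star (u (val K)))).
Proof.
move=> ep f x; rewrite gmulE; apply: eq_bigr => g _.
under eq_bigr => q _ do rewrite ffunE.
rewrite (bigD1 p0) //= [X in _ + X]big1 ?addr0 => [|q ne]; first by rewrite ep eqxx.
by rewrite -ep (inj_eq val_inj) (negbTE ne) !mulr0.
Qed.

Lemma gmul_sandwich2E (p0 : G D) : val p0 = p -> forall f f' z,
  gmul (beta D) (gmul (beta D) f P) f' z =
  \sum_g \sum_h (val (gprod (gprod g p0) h) == val z)%:R *
     (alpha (u (val L)) (star (u (val K))) * beta D (val g) p *
      beta D (val (gprod g p0)) (val h) * f g * f' h).
Proof.
move=> ep f f' z; rewrite gmulE.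
transitivity (\sum_(x : G D) \sum_(y : G D) \sum_(g : G D) (val (gprod g p0) == val x)%:R *
   ((mul (val x) (val y) == val z)%:R * (beta D (val x) (val y) *
     (beta D (val g) p * f g * alpha (u (val L)) (star (u (val K)))) * f' y))).
  apply: eq_bigr => x _; apply: eq_bigr => y _; rewrite (gmul_sandwichE ep).
  by rewrite mulr_sumr mulr_suml mulr_sumr; apply: eq_bigr => g _; ring.
under eq_bigr => x _ do rewrite exchange_big.
rewrite exchange_big; apply: eq_bigr => g _; rewrite exchange_big; apply: eq_bigr => h _.
by rewrite sum_val_eq /=; ring.
Qed.

Lemma emb_mul_sandwich (p0 : G D) : val p0 = p -> forall f f',
  emb L' L f ** emb K K' f' = emb L' K' (gmul (beta D) (gmul (beta D) f P) f').
Proof.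
move=> ep f f'; apply/ffunP => s; rewrite embE.
under [RHS]eq_bigr => z _ do rewrite (gmul_sandwich2E ep) -mulrA.
rewrite sum_val_eq2 /emb tmul_sum_delta sum_ffunE; apply: eq_bigr => g _.
rewrite sum_ffunE; apply: eq_bigr => h _.
rewrite fscE deltaE /embc /uprod /= ep.
have hp : inGD D p by rewrite -ep; apply: valG.
have := beta_cocycle (ustar_inLD L') (valG g) (u_inRD L) (ustar_inLD K) (valG h)
  (u_inRD K') hp.
have -> : mul (mul (mul (star (u (val L'))) (val g)) (u (val L)))
              (mul (mul (star (u (val K))) (val h)) (u (val K'))) =
          mul (mul (star (u (val L'))) (mul (mul (val g) p) (val h))) (u (val K')).
  by rewrite !mulA.
set i1 := (_ == _)%:R => cocycle.
transitivity (beta D (star (u (val L'))) (val g) *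
    beta D (mul (star (u (val L'))) (val g)) (u (val L)) *
    (beta D (star (u (val K))) (val h) * beta D (mul (star (u (val K))) (val h)) (u (val K'))) *
    alpha (mul (mul (star (u (val L'))) (val g)) (u (val L)))
      (mul (mul (star (u (val K))) (val h)) (u (val K'))) * (f g * f' h * i1)).
  by ring.
by rewrite cocycle; ring.
Qed.

End SandwichProduct.

Local Notation lowerS l := (lower_span (strict (Ble le)) (BC beta u C) l).
Local Notation lowerG D l := (lower_span (strict (le D)) (C D) l).

Lemma strict_Ble_Dlt D (l : Lam D) (D1 : Dcl mul) (mu : Lam D1) :
  Dlt mul (val D1) (val D) -> D1 != D -> strict (Ble le) (existT _ D1 mu) (existT _ D l).
Proof.
move=> hlt hne; rewrite /strict /Ble /= hlt /=.
by apply/negP => /eqP /(congr1 tag) /= E; rewrite E eqxx in hne.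
Qed.

Lemma strict_Ble_same D (l mu : Lam D) :
  strict (Ble le) (existT _ D mu) (existT _ D l) = strict (le D) mu l.
Proof.
rewrite /strict /Ble /= (negbTE (Dlt_irr D)) /= eqxx /= tagged_asE.
congr (_ && _); apply/idP/idP => /negP h; apply/negP => E; apply: h.
- by rewrite (eqP E).
- by move: E; rewrite eq_Tagged /=.
Qed.

Lemma lower_emb_below (D1 : Dcl mul) l0 (L K : Lcl D1) f :
  (forall mu : Lam D1, strict (Ble le) (existT _ D1 mu) l0) -> lowerS l0 (emb L K f).
Proof.
move=> below; case: (cellD D1) => _ [coord _ coordK] _ _ _.
rewrite -[f]coordK emb_sum; apply: lower_span_sum => i _; rewrite embZ.
exact: (@lower_span_basis _ _ _ _ (BM M) (BC beta u C) l0 (existT _ D1 (tag i))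
          (L, (tagged i).1) (K, (tagged i).2) _ (below _)).
Qed.

Lemma lower_span_delta (D1 : Dcl mul) l0 q :
  (forall mu : Lam D1, strict (Ble le) (existT _ D1 mu) l0) -> q \in val D1 ->
  lowerS l0 (delta R q).
Proof.
move=> below /uprod_surj[L [K [g [/GDP hg ->]]]].
pose g0 : G D1 := exist (fun x => x \in GD star one D1) g hg.
have [b hb] := embc_unit L K g0.
have -> : delta R (uprod L g K) = fsc b (emb L K (delta R g0)).
  by apply/ffunP => z; rewrite emb_delta !fscE mulrA [b * _]mulrC hb mul1r.
exact/lower_spanZ/lower_emb_below.
Qed.

Lemma emb_mul_lower D (l : Lam D) (L' L K K' : Lcl D) f f' :
  lowerS (existT _ D l) (emb L' L f ** emb K K' f' -
    emb L' K' (gmul (beta D) (gmul (beta D) f (sandwich star one alpha u L K)) f')).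
Proof.
case: (boolP (mul (u (val L)) (star (u (val K))) \in GD star one D)) => hp.
  pose p0 : G D := exist (fun x => x \in GD star one D) _ hp.
  by rewrite (@emb_mul_sandwich D L' L K K' p0 erefl) subrr; apply: lower_span0.
have -> : sandwich star one alpha u L K = 0.
  apply/ffunP => g; rewrite !ffunE; case: eqP => // E.
  by move: hp; rewrite -E (valP g).
rewrite gmulr0 gmul0r emb0 subr0 /emb tmul_sum_delta.
apply: lower_span_sum => g _; apply: lower_span_sum => h _; apply: lower_spanZ.
have hp' : ~ inGD D (mul (u (val L)) (star (u (val K)))) by move=> /GDP; apply/negP.
have [D1 [hq hlt hne]] := uprod_mul_below L' K' (valG g) (valG h) hp'.
by apply: (lower_span_delta (D1 := D1)) hq => mu; apply: strict_Ble_Dlt.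
Qed.

Lemma emb_lower D (l : Lam D) (L K : Lcl D) Y :
  lowerG D l Y -> lowerS (existT _ D l) (emb L K Y).
Proof.
move=> [c ->]; rewrite emb_sum; apply: lower_span_sum => mu hmu.
rewrite emb_sum; apply: lower_span_sum => x _; rewrite emb_sum; apply: lower_span_sum => y _.
rewrite embZ; have hm : strict (Ble le) (existT _ D mu) (existT _ D l) by rewrite strict_Ble_same.
exact: (@lower_span_basis _ _ _ _ (BM M) (BC beta u C) (existT _ D l) (existT _ D mu)
          (L, x) (K, y) _ hm).
Qed.

Definition lower_on D (l : Lam D) (L K : Lcl D) (v : {ffun S -> R}) :=
  exists T, lowerG D l T /\ forall g, v (uprod L (val g) K) = T g * embc L K g.

Lemma lower_on_sum D (l : Lam D) (L K : Lcl D) (J : Type) (r : seq J) (P : pred J) F :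
  (forall j, P j -> lower_on l L K (F j)) -> lower_on l L K (\sum_(j <- r | P j) F j).
Proof.
move=> h; apply: big_ind => //.
- by exists 0; split; [exact: lower_span0 | move=> g; rewrite !ffunE mul0r].
- move=> v1 v2 [T1 [h1 e1]] [T2 [h2 e2]]; exists (T1 + T2); split; first exact: lower_spanD.
  by move=> g; rewrite !ffunE e1 e2 mulrDl.
Qed.

Lemma lower_on_basis D (l : Lam D) (L K : Lcl D) (m : BLam Lam) (x y : BM M m) r :
  strict (Ble le) m (existT _ D l) -> lower_on l L K (fsc r (BC beta u C x y)).
Proof.
case: m x y => D1 mu [L1 x] [K1 y] hm.
have [ED|neD] := eqVneq D1 D; last first.
  exists 0; split => [|g]; first exact: lower_span0.
  rewrite fscE ffunE mul0r; have -> : BC beta u C (L1, x) (K1, y) = emb L1 K1 (C D1 mu x y) by [].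
  rewrite embE big1 ?mulr0 // => h _; case: eqP; rewrite ?mulr0 // => E.
  have := uprod_inD L1 K1 (valG h); rewrite -E => /(Dcl_eq (uprod_inD L K (valG g))) ED.
  by rewrite ED eqxx in neD.
subst D1; rewrite strict_Ble_same in hm.
have BCE : BC beta u C (L1, x) (K1, y) = emb L1 K1 (C D mu x y) by [].
case: (boolP ((L1 == L) && (K1 == K))) => hLK.
- exists (fsc r (C D mu x y)); split => [|g]; first exact: lower_span_basis.
  by rewrite !fscE BCE emb_uprod hLK mulrA.
- exists 0; split => [|g]; first exact: lower_span0.
  by rewrite !fscE BCE emb_uprod (negbTE hLK) ffunE !mul0r mulr0.
Qed.

Lemma lower_emb D (l : Lam D) (L K : Lcl D) Y :
  lowerS (existT _ D l) (emb L K Y) <-> lowerG D l Y.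
Proof.
split; last exact: emb_lower.
move=> [c E]; have [T [hT eT]] : lower_on l L K (emb L K Y).
  rewrite E; apply: lower_on_sum => m hm; apply: lower_on_sum => x _.
  by apply: lower_on_sum => y _; apply: lower_on_basis.
have -> : Y = T; last exact: hT.
apply/ffunP => g; have := eT g; rewrite emb_uprod !eqxx /= => e.
have [b hb] := embc_unit L K g.
by rewrite -[Y g]mulr1 -hb mulrA e -mulrA hb mulr1.
Qed.

Lemma is_phi_bigC D (l : Lam D) (L K : Lcl D) (s t : M D l) r :
  is_phi (tmul mul alpha) (strict (Ble le)) (BC beta u C) (l := existT _ D l) (L, s) (K, t) r
  <-> is_phi_a (@gmul R S mul star one D (beta D)) (strict (le D)) (C D)
        (sandwich star one alpha u L K) s t r.
Proof.
split.
- move=> h s' t'; apply/(lower_emb _ L K); rewrite embB embZ.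
  exact: (lower_span_congr _ (emb_mul_lower l L L K K _ _)).1 (h (L, s') (K, t')).
- move=> h [L' s'] [K' t']; have := (lower_emb _ L' K' _).2 (h s' t').
  rewrite embB embZ; exact: (lower_span_congr _ (emb_mul_lower l L' L K K' _ _)).2.
Qed.

End CellularTransfer.
End Representatives.
End Idempotents.
End AntiInvolution.
End Semigroup.

Theorem lemma13
  (* S : a finite semigroup with anti-involution star *)
  (S : finType) (mul : S -> S -> S) (star : S -> S)
  (mulA : forall x y z, mul x (mul y z) = mul (mul x y) z)
  (starK : forall x, star (star x) = x)
  (starM : forall x y, star (mul x y) = mul (star y) (star x))
  (* R : a commutative ring with 1 *)
  (R : comPzRingType)
  (* alpha : a twisting from S into R with alpha(x,y) = alpha(y^*,x^* ) *)
  (alpha : S -> S -> R)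
  (alpha_tw : forall x y z,
      alpha x y * alpha (mul x y) z = alpha x (mul y z) * alpha y z)
  (alpha_star : forall x y, alpha x y = alpha (star y) (star x))
  (* 1_D : a *-fixed idempotent in each D-class D *)
  (one : Dcl mul -> S)
  (one_in : forall D, one D \in val D)
  (one_idem : forall D, mul (one D) (one D) = one D)
  (one_star : forall D, star (one D) = one D)
  (* beta_D : L_D x L_D^* -> G(R) *)
  (beta : Dcl mul -> S -> S -> R)
  (beta_unit : forall D x y, x \in LD one D -> y \in LDs star one D ->
      exists b, beta D x y * b = 1)
  (beta_tw : forall D x y z,
      x \in LD one D -> y \in LD one D -> y \in LDs star one D ->
      mul x y \in LD one D -> z \in LDs star one D -> mul y z \in LDs star one D ->
      beta D x y * beta D (mul x y) z = beta D x (mul y z) * beta D y z)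
  (alpha_beta : forall D x y z,
      mul x y \in LD one D -> y \in LD one D -> z \in LDs star one D ->
      alpha x y * beta D (mul x y) z = alpha x (mul y z) * beta D y z)
  (beta_star : forall D x y, x \in LD one D -> y \in LDs star one D ->
      beta D x y = beta D (star y) (star x))
  (* a cell datum (Lam_D, M_D, C, star) for each R^{beta_D}[G_D] *)
  (Lam : Dcl mul -> finType) (le : forall D, rel (Lam D))
  (M : forall D, Lam D -> finType)
  (C : forall D (l : Lam D), M D l -> M D l -> {ffun Gt star one D -> R})
  (cellD : forall D,
      is_cellular (@gmul R S mul star one D (beta D)) (@gstar R S mul star one D)
                  (le D) (C D))
  (* the chosen elements u_L \in L with u_L R 1_D *)
  (u : {set S} -> S)
  (u_in : forall (D : Dcl mul) (L : Lcl D), u (val L) \in val L)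
  (u_R : forall (D : Dcl mul) (L : Lcl D), Rrel mul (u (val L)) (one D)) :
  forall (D : Dcl mul) (l : Lam D) (L K : Lcl D) (s t : M D l),
    phi (tmul mul alpha) (strict (Ble le)) (BC beta u C)
        (l := existT _ D l) (L, s) (K, t)
    = phi_a (@gmul R S mul star one D (beta D)) (strict (le D)) (C D)
        (sandwich star one alpha u L K) s t.
Proof.
move=> D l L K s t; rewrite /phi /phi_a; congr (epsilon _).
apply: functional_extensionality => r; apply: propositional_extensionality.
by apply: is_phi_bigC.
Qed.
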